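(* Let $\mathbb{K}$ be a non-Archimedean valued field, $n\ge1$, and $G$ a discrete group such that $H_{n-1}(G, \mathbb{Z})$ is a finitely generated abelian group. Then the comparison map $c^n : H^n_b(G, \mathbb{K}) \to H^n(G, \mathbb{K})$ is injective.
   Context: A non-Archimedean valued field is a field with an absolute value satisfying the ultrametric inequality. $H_{n-1}(G,\mathbb{Z})$ is ordinary group homology with trivial coefficients. $\mathbb{K}$ is a trivial $G$-module; $H^\bullet(G,\mathbb{K})$ is computed by the bar complex of all maps $G^n\to\mathbb{K}$ with $\delta^nf(g_1,\dots,g_{n+1})=f(g_2,\dots,g_{n+1})+\sum_{i=1}^n(-1)^if(g_1,\dots,g_ig_{i+1},\dots,g_{n+1})+(-1)^{n+1}f(g_1,\dots,g_n)$, and $H^\bullet_b(G,\mathbb{K})$ by its subcomplex of bounded maps; $c^n$ is induced by inclusion. *)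

From mathcomp Require Import all_boot all_order all_algebra.
From mathcomp Require Import boolp reals.
Set Implicit Arguments. Unset Strict Implicit. Unset Printing Implicit Defensive.
Import Order.TTheory GRing.Theory Num.Theory.
Local Open Scope ring_scope.

Definition is_group (G : Type) (mul : G -> G -> G) (one : G) (inv : G -> G) : Prop :=
  [/\ (forall x y z, mul x (mul y z) = mul (mul x y) z),
      (forall x, mul one x = x), (forall x, mul x one = x),
      (forall x, mul (inv x) x = one) & (forall x, mul x (inv x) = one)].

Definition nonarch_abs (R : realType) (K : fieldType) (abs : K -> R) : Prop :=
  [/\ (forall x, 0 <= abs x), (forall x, abs x = 0 <-> x = 0),
      (forall x y, abs (x * y) = abs x * abs y) &
      (forall x y, abs (x + y) <= Num.max (abs x) (abs y))].

Section Faces.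
Variables (G : Type) (mul : G -> G -> G).

Definition face_first n (g : 'I_n.+1 -> G) : 'I_n -> G := fun j => g (lift ord0 j).
Definition face_last n (g : 'I_n.+1 -> G) : 'I_n -> G :=
  fun j => g (widen_ord (leqnSn n) j).
(* for k : 'I_n (0-based, k = i-1 with 1 <= i <= n):
   (g_1,...,g_{n+1}) |-> (g_1,...,g_i g_{i+1},...,g_{n+1}) *)
Definition face_mul n (g : 'I_n.+1 -> G) (k : 'I_n) : 'I_n -> G :=
  fun j => if (j < k)%N then g (widen_ord (leqnSn n) j)
           else if (j == k)%N then mul (g (widen_ord (leqnSn n) j)) (g (lift ord0 j))
           else g (lift ord0 j).
End Faces.

Section Cochains.
Variables (G : Type) (mul : G -> G -> G) (K : fieldType).

Definition cochain n := ('I_n -> G) -> K.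

Definition coboundary n (f : cochain n) : cochain n.+1 := fun g =>
  f (face_first g) + \sum_(k < n) (-1) ^+ k.+1 * f (face_mul mul g k)
  + (-1) ^+ n.+1 * f (face_last g).

Definition bounded_cochain (R : realType) (abs : K -> R) n (f : cochain n) : Prop :=
  exists M : R, forall g, abs (f g) <= M.

(* Injectivity of c^n : H^n_b(G,K) -> H^n(G,K), n >= 1, unfolded:
   every bounded n-cocycle which is the coboundary of some (arbitrary)
   (n-1)-cochain is the coboundary of a bounded (n-1)-cochain. *)
Definition comparison_injective (R : realType) (abs : K -> R) (m : nat) : Prop :=
  (* here n = m.+1 *)
  forall f : cochain m.+1,
    bounded_cochain abs f ->
    (forall g, coboundary f g = 0) ->
    (exists b : cochain m, forall g, f g = coboundary b g) ->
    exists b : cochain m, bounded_cochain abs b /\ forall g, f g = coboundary b g.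
End Cochains.

Section Chains.
Variables (G : Type) (mul : G -> G -> G).

(* an integral n-chain, given as a finite formal sum  sum_p  p.1 [p.2] *)
Definition chain n := seq (int * ('I_n -> G)).

Definition chain_val n (c : chain n) (t : 'I_n -> G) : int :=
  \sum_(p <- c) (if pselect (p.2 = t) then p.1 else 0).

Definition chain_bd m (c : chain m.+1) : chain m :=
  flatten [seq ((p.1, face_first p.2) : int * ('I_m -> G))
                 :: [seq (((-1) ^+ k.+1 * p.1)%R, face_mul mul p.2 k)
                    | k : 'I_m <- enum 'I_m]
                 ++ [:: (((-1) ^+ m.+1 * p.1)%R, face_last p.2)]
            | p : int * ('I_m.+1 -> G) <- c].

Definition is_cycle m : chain m -> Prop :=
  match m return chain m -> Prop with
  | 0 => fun _ => True
  | k.+1 => fun c => forall t, chain_val (chain_bd c) t = 0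
  end.

(* H_m(G, Z) is a finitely generated abelian group: there are finitely many
   cycles z_1..z_r such that every cycle is an integral combination of them
   modulo a boundary. *)
Definition homology_fin_gen (m : nat) : Prop :=
  exists zs : seq (chain m),
    (forall i, (i < size zs)%N -> is_cycle (nth [::] zs i)) /\
    forall c : chain m, is_cycle c ->
      exists (a : seq int) (b : chain m.+1), size a = size zs /\
        forall t, chain_val c t =
          \sum_(i < size zs) a`_i * chain_val (nth [::] zs i) t
          + chain_val (chain_bd b) t.
End Chains.

From mathcomp Require Import all_boot all_order all_algebra.
From mathcomp Require Import boolp reals classical_sets.
From mathcomp Require Import zify ring.
Set Implicit Arguments. Unset Strict Implicit. Unset Printing Implicit Defensive.
Import Order.TTheory GRing.Theory Num.Theory.
Local Open Scope ring_scope.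

(* Let f = δb be a bounded cocycle of degree n = m+1.  Writing an m-cycle c as
   Σ a_i z_i + ∂β through finitely many generators z_i of H_m(G, Z) gives
   b(c) = Σ a_i b(z_i) + f(β); as integers have absolute value at most 1 for a
   non-Archimedean absolute value, b is bounded on m-cycles.
   The (m-1)-boundaries form a subgroup of a free abelian group, hence a free
   group, so ∂ splits: there is an additive ψ on boundaries with ψ(∂p) = b(p')
   for some p' with ∂p' = ∂p (freeness comes from Zorn's lemma, extending a
   partial splitting one coordinate at a time).  Then b' = b - ψ∘∂ satisfies
   δb' = f because ∂∂ = 0, and b'(t) = b(t - p') with t - p' a cycle, so b' is
   bounded. *)

Section BarFaces.
Variables (G : Type) (mul : G -> G -> G).
Hypothesis mulA : associative mul.

(* The i-th face of the bar construction on sequences: [face 0] drops [g 0] and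
   [face i] multiplies [g i.-1] by [g i]; on an (n+1)-tuple, [face n.+1]
   deletes the last entry. *)
Definition face (i : nat) (g : nat -> G) (l : nat) : G :=
  if (l.+1 < i)%N then g l else if l.+1 == i then mul (g l) (g l.+1) else g l.+1.

Lemma face_face i j g l : (i <= j)%N -> face j (face i g) l = face i (face j.+1 g) l.
Proof. by move=> le_ij; rewrite /face; do ![case: ifP => ?]; lia || rewrite ?mulA. Qed.

Lemma face_local i g1 g2 l :
  g1 l = g2 l -> g1 l.+1 = g2 l.+1 -> face i g1 l = face i g2 l.
Proof. by move=> e1 e2; rewrite /face e1 e2. Qed.

Definition seq_of_ord n (g : 'I_n.+1 -> G) (l : nat) : G := g (inord l).

(* [coboundary] over an arbitrary ring (convertible to it over [K]); with [int]
   coefficients it yields the chain-level identity [chain_bd (chain_bd c) = 0]. *)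
Definition cobd (Rg : pzRingType) n (f : ('I_n -> G) -> Rg) (g : 'I_n.+1 -> G) : Rg :=
  f (face_first g) + \sum_(k < n) (-1) ^+ k.+1 * f (face_mul mul g k)
  + (-1) ^+ n.+1 * f (face_last g).

Lemma cobd_faceE (Rg : pzRingType) n (f : ('I_n -> G) -> Rg) g :
  cobd f g = \sum_(i < n.+2) (-1) ^+ i * f (fun l : 'I_n => face i (seq_of_ord g) l).
Proof.
have inordE (l : nat) (i : 'I_n.+1) : l = i -> inord l = i.
  by move=> eli; apply: val_inj; rewrite /= inordK // eli.
rewrite big_ord_recl big_ord_recr /= /cobd -addrA expr0 mul1r.
congr (f _ + (_ + _ * f _)).
- by apply: funext => l; rewrite /face /seq_of_ord /= (inordE l.+1 (lift ord0 l)).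
- apply: eq_bigr => k _; congr (_ * f _); apply: funext => l.
  by rewrite /face /seq_of_ord /face_mul /= !ltnS eqSS (inordE l.+1 (lift ord0 l))
    // (inordE l (widen_ord _ l)).
- apply: funext => l; rewrite /face /seq_of_ord /face_last /= ltnS ltn_ord.
  by rewrite (inordE l (widen_ord _ l)).
Qed.

Lemma sum_triangle_antisym (V : zmodType) (a : nat -> nat -> V) n :
  (forall i j, (i <= j)%N -> a i j = - a j.+1 i) ->
  \sum_(i < n.+1) \sum_(j < n) a i j = 0.
Proof.
move=> a_antisym; elim: n => [|n IH]; first by rewrite big1 // => i _; rewrite big_ord0.
rewrite big_ord_recr /=.
under eq_bigr => i _ do rewrite big_ord_recr /=.
rewrite big_split /= IH add0r -big_split big1 // => i _.
by rewrite (a_antisym i n) -1?ltnS //= addNr.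
Qed.

Lemma cobd_cobd (Rg : pzRingType) n (f : ('I_n -> G) -> Rg) g : cobd (cobd f) g = 0.
Proof.
pose a i j := (-1) ^+ (i + j) * f (fun l : 'I_n => face j (face i (seq_of_ord g)) l).
rewrite cobd_faceE -[RHS](@sum_triangle_antisym _ a n.+2).
  apply: eq_bigr => i _; rewrite cobd_faceE big_distrr; apply: eq_bigr => j _ /=.
  rewrite /a exprD mulrA; congr (_ * _); apply: congr1; apply: funext => l.
  have lt_ln := ltn_ord l.
  by apply: face_local; rewrite /seq_of_ord inordK //; lia.
move=> i j le_ij; rewrite /a addnC addSn exprS mulN1r mulNr opprK addnC.
by congr (_ * _); apply: congr1; apply: funext => l; rewrite face_face.
Qed.

Lemma cobdB (Rg : pzRingType) n (f1 f2 : ('I_n -> G) -> Rg) g :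
  cobd (fun t => f1 t - f2 t) g = cobd f1 g - cobd f2 g.
Proof. by rewrite !cobd_faceE -sumrB; apply: eq_bigr => i _; rewrite mulrBr. Qed.

End BarFaces.

Section ChainPairing.
Variables (G : Type) (mul : G -> G -> G).
Hypothesis mulA : associative mul.

Definition chain_eval (Rg : pzRingType) n (phi : ('I_n -> G) -> Rg) (c : chain G n) : Rg :=
  \sum_(p <- c) p.1%:~R * phi p.2.

Definition chain_scale n (z : int) (c : chain G n) : chain G n :=
  [seq (z * p.1, p.2) | p <- c].

Section Eval.
Variable Rg : pzRingType.

Lemma chain_eval_cat n (phi : ('I_n -> G) -> Rg) c1 c2 :
  chain_eval phi (c1 ++ c2) = chain_eval phi c1 + chain_eval phi c2.
Proof. exact: big_cat. Qed.

Lemma chain_eval_flatten n (phi : ('I_n -> G) -> Rg) (cs : seq (chain G n)) :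
  chain_eval phi (flatten cs) = \sum_(c <- cs) chain_eval phi c.
Proof. exact: big_flatten. Qed.

Lemma chain_eval_scale n (phi : ('I_n -> G) -> Rg) z c :
  chain_eval phi (chain_scale z c) = z%:~R * chain_eval phi c.
Proof.
rewrite /chain_eval big_map big_distrr; apply: eq_bigr => p _ /=.
by rewrite intrM mulrA.
Qed.

Lemma chain_eval1 n (phi : ('I_n -> G) -> Rg) t : chain_eval phi [:: (1, t)] = phi t.
Proof. by rewrite /chain_eval big_seq1 mul1r. Qed.

Lemma chain_eval_bd n (phi : ('I_n -> G) -> Rg) (c : chain G n.+1) :
  chain_eval phi (chain_bd mul c) = chain_eval (cobd mul phi) c.
Proof.
rewrite /chain_eval /chain_bd big_flatten big_map; apply: eq_bigr => p _.
rewrite big_cons big_cat big_map big_seq1 /cobd big_enum /= !mulrDr addrA.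
have signE k t : ((-1) ^+ k * p.1)%:~R * phi t = p.1%:~R * ((-1) ^+ k * phi t).
  by rewrite [(_ * p.1)%R]mulrC intrM intr_sign mulrA.
rewrite signE big_distrr /=; congr (_ + _ + _); apply: eq_bigr => k _.
exact: signE.
Qed.

Lemma chain_eval_split n (phi : ('I_n -> G) -> Rg) c t :
  chain_eval phi c =
  (chain_val c t)%:~R * phi t + chain_eval phi [seq p <- c | ~~ `[< p.2 = t >]].
Proof.
rewrite /chain_eval /chain_val (bigID (fun p => `[< p.2 = t >])) /= big_filter.
congr (_ + _); rewrite rmorph_sum big_distrl big_mkcond /=; apply: eq_bigr => p _.
by case: pselect => [e|ne]; [rewrite asboolT //= -e | rewrite asboolF // mul0r].
Qed.

Lemma chain_eval_eq0 n (phi : ('I_n -> G) -> Rg) c :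
  (forall t, chain_val c t = 0) -> chain_eval phi c = 0.
Proof.
move: (leqnn (size c)); elim: (size c) {-2}c => [|N IH] [|[a t] c'] //= le_cN c0;
  try by rewrite /chain_eval big_nil.
rewrite (chain_eval_split _ _ t) c0 mul0r add0r; apply: IH => [|u].
  by rewrite /= asboolT //= size_filter (leq_trans (count_size _ _)).
rewrite /chain_val big_filter big_mkcond /=.
have [->|ne_ut] := pselect (u = t).
  by apply: big1 => p _; case: asboolP => //= ne; case: pselect.
rewrite -[RHS](c0 u); apply: eq_bigr => p _; case: pselect => [e|ne]; last exact: if_same.
by rewrite asboolF // e.
Qed.

End Eval.

Definition indicator n (t : 'I_n -> G) (u : 'I_n -> G) : int :=
  if pselect (u = t) then 1 else 0.

Lemma chain_val_eval n (c : chain G n) t : chain_val c t = chain_eval (indicator t) c.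
Proof.
apply: eq_bigr => p _; rewrite /indicator intz.
by case: (pselect (p.2 = t)) => _ /=; rewrite ?mulr1 ?mulr0.
Qed.

Lemma chain_val_cat n (c1 c2 : chain G n) t :
  chain_val (c1 ++ c2) t = chain_val c1 t + chain_val c2 t.
Proof. exact: big_cat. Qed.

Lemma chain_val_flatten n (cs : seq (chain G n)) t :
  chain_val (flatten cs) t = \sum_(c <- cs) chain_val c t.
Proof. exact: big_flatten. Qed.

Lemma chain_val_scale n (c : chain G n) z t :
  chain_val (chain_scale z c) t = z * chain_val c t.
Proof. by rewrite !chain_val_eval chain_eval_scale intz. Qed.

Lemma chain_bd_cat n (c1 c2 : chain G n.+1) :
  chain_bd mul (c1 ++ c2) = chain_bd mul c1 ++ chain_bd mul c2.
Proof. by rewrite /chain_bd map_cat flatten_cat. Qed.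

Lemma chain_val_bd_scale n (c : chain G n.+1) z t :
  chain_val (chain_bd mul (chain_scale z c)) t = z * chain_val (chain_bd mul c) t.
Proof. by rewrite !chain_val_eval !chain_eval_bd chain_eval_scale intz. Qed.

Lemma chain_val_bd_bd n (c : chain G n.+2) t :
  chain_val (chain_bd mul (chain_bd mul c)) t = 0.
Proof.
rewrite chain_val_eval !chain_eval_bd; apply: big1 => p _.
by rewrite cobd_cobd // mulr0.
Qed.

Lemma chain_val_support n (c : chain G n) t :
  chain_val c t != 0 -> List.In t (map snd c).
Proof.
elim: c => [|p c IH]; first by rewrite /chain_val big_nil eqxx.
rewrite /chain_val big_cons /=; case: pselect => [e|ne]; first by left.
by rewrite add0r => /IH; right.
Qed.

Lemma eq_chain_eval (Rg : pzRingType) n (phi : ('I_n -> G) -> Rg) c1 c2 :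
  (forall t, chain_val c1 t = chain_val c2 t) -> chain_eval phi c1 = chain_eval phi c2.
Proof.
move=> c12; apply/eqP; rewrite -subr_eq0.
have -> : - chain_eval phi c2 = chain_eval phi (chain_scale (-1) c2).
  by rewrite chain_eval_scale mulN1r.
rewrite -chain_eval_cat; apply/eqP/chain_eval_eq0 => t.
by rewrite chain_val_cat chain_val_scale c12 mulN1r subrr.
Qed.

End ChainPairing.

Lemma divzB (d m n : int) :
  (d %| m)%Z -> (d %| n)%Z -> ((m - n) %/ d)%Z = (m %/ d)%Z - (n %/ d)%Z.
Proof.
move=> dm dn; have [->|d0] := eqVneq d 0; first by rewrite !divz0 subr0.
by rewrite -{1}(divzK dm) -{1}(divzK dn) -mulrBl mulzK.
Qed.

(* [P] presents an abelian group through [padd] and [pscale] (integral chains,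
   which are plain lists); [bd] is a homomorphism into the free abelian group of
   finitely supported [X -> int] and [ev] one into [A]. *)
Section BoundarySplitting.
Variables (X P : Type) (A : zmodType) (bd : P -> X -> int) (ev : P -> A)
  (padd : P -> P -> P) (pscale : int -> P -> P) (p0 : P).
Hypotheses (bd_add : forall p q x, bd (padd p q) x = bd p x + bd q x)
  (ev_add : forall p q, ev (padd p q) = ev p + ev q)
  (bd_scale : forall z p x, bd (pscale z p) x = z * bd p x)
  (ev_scale : forall z p, ev (pscale z p) = ev p *~ z)
  (bd_finite : forall p, exists s : seq X, forall x, bd p x != 0 -> List.In x s).

Definition is_bd (y : X -> int) : Prop := exists p, bd p = y.

Definition is_bd_on (S : set X) (y : X -> int) : Prop :=
  is_bd y /\ forall x, ~ S x -> y x = 0.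

Definition splitting_on (S : set X) (psi : (X -> int) -> A) : Prop :=
  (forall y1 y2, is_bd_on S y1 -> is_bd_on S y2 ->
     psi (fun x => y1 x - y2 x) = psi y1 - psi y2) /\
  (forall y, is_bd_on S y -> exists2 p, bd p = y & psi y = ev p).

Record partial_splitting := PartialSplitting {
  ps_dom : set X;
  ps_map : (X -> int) -> A;
  ps_splitting : splitting_on ps_dom ps_map }.

Definition ps_le (s t : partial_splitting) : Prop :=
  (forall x, ps_dom s x -> ps_dom t x) /\
  (forall y, is_bd_on (ps_dom s) y -> ps_map t y = ps_map s y).

Lemma is_bd_sub y1 y2 : is_bd y1 -> is_bd y2 -> is_bd (fun x => y1 x - y2 x).
Proof.
move=> [p1 <-] [p2 <-]; exists (padd p1 (pscale (-1) p2)); apply: funext => x.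
by rewrite bd_add bd_scale mulN1r.
Qed.

Lemma is_bd_scale z y : is_bd y -> is_bd (fun x => z * y x).
Proof. by move=> [p <-]; exists (pscale z p); apply: funext => x; rewrite bd_scale. Qed.

Lemma is_bd_on0 S : is_bd_on S (fun _ => 0).
Proof.
by split=> //; exists (pscale 0 p0); apply: funext => x; rewrite bd_scale mul0r.
Qed.

Lemma is_bd_on_sub S y1 y2 :
  is_bd_on S y1 -> is_bd_on S y2 -> is_bd_on S (fun x => y1 x - y2 x).
Proof.
move=> [b1 y1S] [b2 y2S]; split; first exact: is_bd_sub.
by move=> x Sx; rewrite y1S // y2S // subr0.
Qed.

Lemma is_bd_on_scale S z y : is_bd_on S y -> is_bd_on S (fun x => z * y x).
Proof. by move=> [b yS]; split=> [|x Sx]; [exact: is_bd_scale | rewrite yS // mulr0]. Qed.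

Lemma is_bd_on_mono (S T : set X) y :
  (forall x, S x -> T x) -> is_bd_on S y -> is_bd_on T y.
Proof. by move=> ST [b yS]; split=> // x Tx; apply: yS => /ST. Qed.

Lemma splitting_on_set0 : splitting_on set0 (fun _ => 0).
Proof.
split=> [*|y [[p bdp] y0]]; first by rewrite subr0.
exists (pscale 0 p); last by rewrite ev_scale mulr0z.
by apply: funext => x; rewrite bd_scale mul0r y0.
Qed.

Section ChainUnion.
Variables (C : set partial_splitting) (s0 : partial_splitting).
Hypotheses (Cs0 : C s0) (C_total : total_on C ps_le).

Let dom_union x := exists2 s, C s & ps_dom s x.

Lemma is_bd_on_chain y :
  is_bd_on dom_union y -> exists2 s, C s & is_bd_on (ps_dom s) y.
Proof.
move=> [[p bdp] y0]; have [l supp_l] := bd_finite p.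
suff [s Cs sl] : exists2 s, C s & forall x, List.In x l -> y x != 0 -> ps_dom s x.
  exists s => //; split=> [|x sx]; first by exists p.
  by apply/eqP; apply: contraT => yx; case: sx; apply: sl => //; apply: supp_l; rewrite bdp.
elim: l {supp_l} => [|x l [s Cs sl]]; first by exists s0.
have [yx0|yx] := eqVneq (y x) 0.
  by exists s => // x' [<-|/sl//]; rewrite yx0 eqxx.
have [s' Cs' s'x] : dom_union x by apply: contraPP yx => /y0 ->; rewrite eqxx.
have [[ss' _]|[s's _]] := C_total Cs Cs'.
  by exists s' => // x' [<-//|/sl h /h]; apply: ss'.
by exists s => // x' [<- _|/sl//]; apply: s's.
Qed.

Lemma is_bd_on_chain2 y1 y2 : is_bd_on dom_union y1 -> is_bd_on dom_union y2 ->
  exists2 s, C s & is_bd_on (ps_dom s) y1 /\ is_bd_on (ps_dom s) y2.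
Proof.
move=> /is_bd_on_chain[s1 Cs1 y1s1] /is_bd_on_chain[s2 Cs2 y2s2].
have [[s12 _]|[s21 _]] := C_total Cs1 Cs2.
  by exists s2 => //; split=> //; apply: is_bd_on_mono y1s1.
by exists s1 => //; split=> //; apply: is_bd_on_mono y2s2.
Qed.

Let union_map y : A :=
  if pselect (exists2 s, C s & is_bd_on (ps_dom s) y) is left ex
  then ps_map (s2val (cid2 ex)) y else 0.

Lemma union_mapE s y : C s -> is_bd_on (ps_dom s) y -> union_map y = ps_map s y.
Proof.
move=> Cs ys; rewrite /union_map; case: pselect => [ex|]; last by case; exists s.
case: (cid2 ex) => s' Cs' ys' /=.
by have [[_ ->]|[_ ->]] := C_total Cs Cs'.
Qed.

Lemma splitting_on_union : splitting_on dom_union union_map.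
Proof.
split=> [y1 y2 /is_bd_on_chain2 h /h[s Cs [y1s y2s]]|y /is_bd_on_chain[s Cs ys]].
  rewrite !(union_mapE Cs) //; last exact: is_bd_on_sub.
  exact: (ps_splitting s).1.
by rewrite (union_mapE Cs) //; apply: (ps_splitting s).2.
Qed.

Lemma ps_chain_ub : exists t, forall s, C s -> ps_le s t.
Proof.
exists (PartialSplitting splitting_on_union) => s Cs; split=> [x sx|y ys] /=.
  by exists s.
exact: union_mapE.
Qed.

End ChainUnion.

Lemma coord_generator S x0 :
  exists2 y1, is_bd_on S y1 & forall y, is_bd_on S y -> (y1 x0 %| y x0)%Z.
Proof.
have [[y [yS yx0]]|all0] := pselect (exists y, is_bd_on S y /\ y x0 != 0); last first.
  exists (fun _ => 0) => [|y yS]; first exact: is_bd_on0.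
  by rewrite dvd0z; apply/negPn/negP => yx0; apply: all0; exists y.
pose Pk k := (0 < k)%N && `[< exists2 y, is_bd_on S y & `|y x0|%N = k >].
have exk : exists k, Pk k.
  by exists `|y x0|%N; rewrite /Pk absz_gt0 yx0; apply/asboolP; exists y.
have [k /andP[k0 /asboolP[y1 y1S y1k]] kmin] := ex_minnP exk.
exists y1 => // y' y'S; apply/dvdz_mod0P/eqP; apply: contraT => r0.
have y10 : y1 x0 != 0 by rewrite -absz_gt0 y1k.
have : Pk `|(y' x0 %% y1 x0)%Z|%N.
  rewrite /Pk absz_gt0 r0; apply/asboolP.
  exists (fun x => y' x - (y' x0 %/ y1 x0)%Z * y1 x).
    by apply: is_bd_on_sub => //; apply: is_bd_on_scale.
  by rewrite {1}(divz_eq (y' x0) (y1 x0)) addrAC subrr add0r.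
move/kmin; have := ltz_mod (y' x0) y10; have := modz_ge0 (y' x0) y10; lia.
Qed.

(* The values at [x0] of the boundaries supported in [S'] are the multiples of
   [y1 x0]; subtracting the matching multiple of [y1] lands in the old domain. *)
Lemma ps_extend (t : partial_splitting) x0 :
  ~ ps_dom t x0 -> exists2 t', ps_le t t' & ps_dom t' x0.
Proof.
move=> tx0; pose S' x := ps_dom t x \/ x = x0.
have [y1 y1S' y1_dvd] := coord_generator S' x0.
have [p1 bdp1] := y1S'.1.
pose q y := (y x0 %/ y1 x0)%Z.
pose red y x := y x - q y * y1 x.
have redS y : is_bd_on S' y -> is_bd_on (ps_dom t) (red y).
  move=> yS'; split; first by apply: is_bd_sub; [case: yS' | apply/is_bd_scale; case: y1S'].
  move=> x tx; have [->|ne] := pselect (x = x0).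
    by rewrite /red /q divzK ?subrr // y1_dvd.
  by rewrite /red yS'.2 ?y1S'.2 ?mulr0 ?subr0 // => -[].
pose psi y := ps_map t (red y) + ev p1 *~ q y.
have qB y y' : is_bd_on S' y -> is_bd_on S' y' ->
    q (fun x => y x - y' x) = q y - q y'.
  by move=> yS' y'S'; rewrite /q divzB ?y1_dvd.
have psiS' : splitting_on S' psi.
  split=> [y y' yS' y'S'|y yS'].
    have redB : red (fun x => y x - y' x) = (fun x => red y x - red y' x).
      by apply: funext => x; rewrite /red qB //; ring.
    rewrite /psi redB qB // mulrzBr (ps_splitting t).1; first by rewrite opprD addrACA.
      exact: redS.
    exact: redS.
  have [p bdp psi_ev] := (ps_splitting t).2 _ (redS y yS').
  exists (padd p (pscale (q y) p1)).
    by apply: funext => x; rewrite bd_add bd_scale bdp bdp1 /red subrK.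
  by rewrite /psi psi_ev ev_add ev_scale.
exists (PartialSplitting psiS'); last by right.
split=> [x tx|y yt] /=; first by left.
have qy : q y = 0 by rewrite /q (yt.2 x0 tx0) div0z.
rewrite /psi qy mulr0z addr0; congr (ps_map t); apply: funext => x.
by rewrite /red qy mul0r subr0.
Qed.

Lemma exists_total_splitting : exists psi, splitting_on setT psi.
Proof.
pose le s t := `[< ps_le s t >].
have le_refl s : le s s by apply/asboolP; split.
have le_trans r s t : le r s -> le s t -> le r t.
  move=> /asboolP[rs rsE] /asboolP[st stE]; apply/asboolP; split=> [x /rs/st //|y yr].
  by rewrite stE ?rsE //; apply: is_bd_on_mono yr.
have le_chain C : total_on C le -> exists t, forall s, C s -> le s t.
  move=> C_total; have [[s0 Cs0]|C0] := pselect (exists s, C s); last first.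
    by exists (PartialSplitting splitting_on_set0) => s Cs; case: C0; exists s.
  have C_total' : total_on C ps_le.
    by move=> s t Cs Ct; case: (C_total s t Cs Ct) => /asboolP; [left | right].
  have [t ub] := ps_chain_ub Cs0 C_total'.
  by exists t => s Cs; apply/asboolP/ub.
have [t tmax] := ZL_preorder (PartialSplitting splitting_on_set0) le_refl le_trans le_chain.
have t_full x : ps_dom t x.
  apply: contrapT => tx; have [t' tt' t'x] := ps_extend tx.
  by have /asboolP[t't _] := tmax t' (asboolT tt'); apply: tx; apply: t't.
have onT y : is_bd_on setT y -> is_bd_on (ps_dom t) y by apply: is_bd_on_mono.
exists (ps_map t); split=> [y1 y2 /onT y1t /onT y2t|y /onT yt].
  exact: (ps_splitting t).1.
exact: (ps_splitting t).2.
Qed.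

Lemma boundary_splitting : exists psi : (X -> int) -> A,
  [/\ forall p q, psi (bd (padd p q)) = psi (bd p) + psi (bd q),
      forall z p, psi (bd (pscale z p)) = psi (bd p) *~ z &
      forall p, exists2 p', bd p' = bd p & psi (bd p) = ev p'].
Proof.
have [psi [psiB psi_ev]] := exists_total_splitting.
have onT p : is_bd_on setT (bd p) by split=> [|x []//]; exists p.
have psi_ext p q : bd p =1 bd q -> psi (bd p) = psi (bd q).
  by move=> pq; congr psi; apply: funext.
have psi_sub p q : psi (bd (padd p (pscale (-1) q))) = psi (bd p) - psi (bd q).
  rewrite -psiB //; congr psi; apply: funext => x.
  by rewrite bd_add bd_scale mulN1r.
have psi0 p : psi (bd (pscale 0 p)) = 0.
  rewrite -(subrr (psi (bd p))) -psi_sub; apply: psi_ext => x.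
  by rewrite bd_add !bd_scale; ring.
have psi_opp p : psi (bd (pscale (-1) p)) = - psi (bd p).
  rewrite -[RHS]add0r -(psi0 p) -psi_sub; apply: psi_ext => x.
  by rewrite bd_add !bd_scale; ring.
have psi_add p q : psi (bd (padd p q)) = psi (bd p) + psi (bd q).
  rewrite -[psi (bd q)]opprK -psi_opp -psi_sub; apply: psi_ext => x.
  by rewrite !bd_add !bd_scale; ring.
have psi_scale_nat (n : nat) p : psi (bd (pscale n p)) = psi (bd p) *~ n.
  elim: n => [|n IH]; first exact: psi0.
  rewrite -pmulrn mulrSr pmulrn -IH -psi_add; apply: psi_ext => x.
  by rewrite bd_add !bd_scale; ring.
exists psi; split=> // [[n|n] p|p]; first exact: psi_scale_nat.
  rewrite NegzE mulrNz -psi_scale_nat -psi_opp; apply: psi_ext => x.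
  by rewrite !bd_scale; ring.
by have [p' <- ->] := psi_ev _ (onT p); exists p'.
Qed.

End BoundarySplitting.

Section NonArchimedean.
Variables (R : realType) (K : fieldType) (abs : K -> R).
Hypothesis abs_nonarch : nonarch_abs abs.

Lemma abs_ge0 x : 0 <= abs x. Proof. by case: abs_nonarch. Qed.

Lemma abs0 : abs 0 = 0. Proof. by case: abs_nonarch => _ abs_eq0 _ _; apply/abs_eq0. Qed.

Lemma absM x y : abs (x * y) = abs x * abs y. Proof. by case: abs_nonarch. Qed.

Lemma abs_add_max x y : abs (x + y) <= Num.max (abs x) (abs y).
Proof. by case: abs_nonarch. Qed.

Lemma abs1 : abs 1 = 1.
Proof.
have abs1_neq0 : abs 1 != 0.
  by apply/eqP; case: abs_nonarch => _ abs_eq0 _ _ /abs_eq0/eqP; rewrite oner_eq0.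
by apply: (mulIf abs1_neq0); rewrite -absM !mul1r.
Qed.

Lemma absN1 : abs (-1) = 1.
Proof. by apply/eqP; rewrite -sqrp_eq1 ?abs_ge0 // expr2 -absM mulrNN mulr1 abs1. Qed.

Lemma abs_intr_le1 (z : int) : abs z%:~R <= 1.
Proof.
have abs_natr_le1 (n : nat) : abs n%:R <= 1.
  elim: n => [|n IH]; first by rewrite abs0 ler01.
  by rewrite mulrSr (le_trans (abs_add_max _ _)) // ge_max IH abs1 lexx.
case: z => n; first exact: abs_natr_le1.
by rewrite NegzE intrN -mulN1r absM absN1 mul1r; exact: abs_natr_le1.
Qed.

Lemma abs_intrM_le z x : abs (z%:~R * x) <= abs x.
Proof. by rewrite absM ler_piMl ?abs_ge0 ?abs_intr_le1. Qed.

Lemma abs_sum_le (I : Type) (s : seq I) (F : I -> K) B :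
  0 <= B -> (forall i, abs (F i) <= B) -> abs (\sum_(i <- s) F i) <= B.
Proof.
move=> B_ge0 FB; elim: s => [|i s IH]; first by rewrite big_nil abs0.
by rewrite big_cons (le_trans (abs_add_max _ _)) // ge_max FB IH.
Qed.

End NonArchimedean.

Section Comparison.
Variables (G : Type) (mul : G -> G -> G) (R : realType) (K : fieldType) (abs : K -> R).
Hypothesis mulA : associative mul.

Lemma cochain0_bounded (g0 : G) (b : cochain G K 0) : bounded_cochain abs b.
Proof.
exists (abs (b (fun _ => g0))) => g.
by have -> : g = (fun _ => g0) by apply: funext => -[].
Qed.

Lemma bounded_on_cycles_of_fin_gen m (b : cochain G K m.+1) (f : cochain G K m.+2) :
  nonarch_abs abs -> homology_fin_gen mul m.+1 -> bounded_cochain abs f ->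
  (forall g, f g = coboundary mul b g) ->
  exists M, forall c : chain G m.+1, is_cycle mul c -> abs (chain_eval b c) <= M.
Proof.
move=> abs_nonarch [zs [_ zs_span]] [M fM] fE.
pose Mz := \sum_(i < size zs) abs (chain_eval b (nth [::] zs i)).
have Mz_ge0 : 0 <= Mz by apply: sumr_ge0 => i _; apply: abs_ge0.
exists (Num.max Mz M) => c /zs_span[a [beta [_ cE]]].
pose lin := flatten [seq chain_scale a`_i (nth [::] zs i) | i : 'I_(size zs) <- enum 'I_(size zs)].
have -> : chain_eval b c = chain_eval b lin + chain_eval f beta.
  rewrite (@eq_chain_eval _ _ _ _ _ (lin ++ chain_bd mul beta)) => [|t].
    rewrite chain_eval_cat chain_eval_bd //; congr (_ + _).
    by apply: eq_bigr => p _; rewrite fE.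
  rewrite chain_val_cat chain_val_flatten big_map big_enum cE /=; congr (_ + _).
  by apply: eq_bigr => i _; rewrite chain_val_scale.
have Mz_le_max : 0 <= Num.max Mz M by rewrite le_max Mz_ge0.
rewrite (le_trans (abs_add_max _ _ _)) // ge_max; apply/andP; split.
  rewrite chain_eval_flatten big_map; apply: abs_sum_le => // i.
  rewrite chain_eval_scale (le_trans (abs_intrM_le _ _ _)) // le_max; apply/orP; left.
  by rewrite /Mz (bigD1 i) //= lerDl sumr_ge0 // => j _; apply: abs_ge0.
apply: abs_sum_le => // p; rewrite (le_trans (abs_intrM_le _ _ _)) //.
by rewrite le_max fM orbT.
Qed.

Lemma bounded_primitive_of_bounded_on_cycles m (b : cochain G K m.+1) M :
  (forall c : chain G m.+1, is_cycle mul c -> abs (chain_eval b c) <= M) ->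
  exists b' : cochain G K m.+1,
    bounded_cochain abs b' /\ forall g, coboundary mul b' g = coboundary mul b g.
Proof.
move=> bM; pose bdv (c : chain G m.+1) t := chain_val (chain_bd mul c) t.
have bdv_cat p q t : bdv (p ++ q) t = bdv p t + bdv q t.
  by rewrite /bdv chain_bd_cat chain_val_cat.
have bdv_scale z p t : bdv (chain_scale z p) t = z * bdv p t.
  exact: chain_val_bd_scale.
have eval_scale z p : chain_eval b (chain_scale z p) = chain_eval b p *~ z.
  by rewrite chain_eval_scale mulrzl.
have bdv_finite p : exists s, forall t, bdv p t != 0 -> List.In t s.
  by exists (map snd (chain_bd mul p)) => t; apply: chain_val_support.
have [psi [psiD psiZ psi_ev]] := boundary_splitting [::] bdv_cat
  (chain_eval_cat b) bdv_scale eval_scale bdv_finite.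
pose gen t : chain G m.+1 := [:: (1, t)].
pose corr t := psi (bdv (gen t)).
have psi0 c : (forall t, bdv c t = 0) -> psi (bdv c) = 0.
  move=> c0; have -> : bdv c = bdv (chain_scale 0 c).
    by apply: funext => t; rewrite bdv_scale mul0r c0.
  by rewrite psiZ mulr0z.
have corr_eval c : chain_eval corr c = psi (bdv c).
  elim: c => [|[z t] c IH].
    by rewrite psi0 => [|t]; apply: big_nil.
  have -> : (z, t) :: c = chain_scale z (gen t) ++ c by rewrite /= mulr1.
  by rewrite psiD psiZ -IH chain_eval_cat chain_eval_scale chain_eval1 mulrzl.
exists (fun t => b t - corr t); split.
  exists M => t; have [p bdp corrE] := psi_ev (gen t).
  have cyc : is_cycle mul (gen t ++ chain_scale (-1) p).
    by move=> u; rewrite -/(bdv _ u) bdv_cat bdv_scale bdp mulN1r subrr.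
  by have := bM _ cyc; rewrite chain_eval_cat chain_eval_scale chain_eval1 mulN1r -corrE.
have corr_cocycle g : cobd mul corr g = 0.
  rewrite -(chain_eval1 (cobd mul corr)) -chain_eval_bd corr_eval psi0 // => t.
  exact: (chain_val_bd_bd mulA).
by move=> g; rewrite [LHS]cobdB corr_cocycle subr0.
Qed.

End Comparison.

Theorem corollary9p44 (R : realType) (K : fieldType) (abs : K -> R)
  (hK : nonarch_abs abs)
  (G : Type) (mul : G -> G -> G) (one : G) (inv : G -> G)
  (hG : is_group mul one inv) (m : nat) :
  homology_fin_gen mul m -> comparison_injective mul abs m.
Proof.
move=> fin_gen f f_bounded _ [b fE].
have [mulA _ _ _ _] := hG.
case: m fin_gen f f_bounded b fE => [|m] fin_gen f f_bounded b fE.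
  by exists b; split=> //; exact: cochain0_bounded one b.
have [M bM] := bounded_on_cycles_of_fin_gen hK fin_gen f_bounded fE.
have [b' [b'_bounded b'E]] := bounded_primitive_of_bounded_on_cycles mulA bM.
by exists b'; split=> // g; rewrite fE b'E.
Qed.
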